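(* Let $\mathcal{L},\mathcal{L}'$ be first order languages, $\mathfrak{M}$ an $\mathcal{L}$-structure, $\mathcal{U}$ a non-empty class of $\mathcal{L}'$-structures, $\mathcal{G}$ a set of $\mathcal{L}$-sentences and $\mathcal{G}'$ a set of $\mathcal{L}'$-sentences. Suppose that $(\mathcal{G},\mathfrak{M})$ is uniformly encodable in $(\mathcal{G}',\mathcal{U})$ and that there is no algorithm to decide whether or not a sentence $F\in\mathcal{G}$ is true in $\mathfrak{M}$. Let $\mathcal{C}$ be a non-empty collection of non-empty subclasses of $\mathcal{U}$. Then there is no algorithm which, given $F\in\mathcal{G}'$, decides whether or not there exists a class $\mathcal{V}\in\mathcal{C}$ such that every structure in $\mathcal{V}$ satisfies $F$.
   Context: $(\mathcal{G},\mathfrak{M})$ is uniformly encodable in $(\mathcal{G}',\mathcal{U})$ if there is an algorithm $\mathcal{A}$ which, given $F\in\mathcal{G}$, returns $\mathcal{A}(F)\in\mathcal{G}'$ such that the following are equivalent: (i) $\mathfrak{M}$ satisfies $F$; (ii) every structure in $\mathcal{U}$ satisfies $\mathcal{A}(F)$; (iii) some structure in $\mathcal{U}$ satisfies $\mathcal{A}(F)$. *)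

From mathcomp Require Import all_boot.
Set Implicit Arguments. Unset Strict Implicit. Unset Printing Implicit Defensive.

(* A first-order language (with equality): countable sets of function and
   relation symbols, each with an arity. Constants are 0-ary functions. *)
Record language := Language {
  Fn : countType;
  Pr : countType;
  farity : Fn -> nat;
  parity : Pr -> nat }.

Section Syntax.
Variable L : language.

Inductive term : Type :=
| Var of nat
| App of Fn L & seq term.

Inductive formula : Type :=
| FFalse
| FTrue
| FEq of term & term
| FAtom of Pr L & seq term
| FNot of formula
| FAnd of formula & formula
| FOr of formula & formula
| FImp of formula & formula
| FIff of formula & formula
| FAll of nat & formula
| FEx of nat & formula.

Fixpoint twf (t : term) : bool :=
  match t with
  | Var _ => true
  | App f ts => (size ts == farity f) && all twf ts
  end.

Fixpoint fwf (phi : formula) : bool :=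
  match phi with
  | FFalse | FTrue => true
  | FEq t1 t2 => twf t1 && twf t2
  | FAtom p ts => (size ts == parity p) && all twf ts
  | FNot f => fwf f
  | FAnd f g | FOr f g | FImp f g | FIff f g => fwf f && fwf g
  | FAll _ f | FEx _ f => fwf f
  end.

Fixpoint tfv (t : term) : seq nat :=
  match t with
  | Var i => [:: i]
  | App _ ts => flatten (map tfv ts)
  end.

Fixpoint ffv (phi : formula) : seq nat :=
  match phi with
  | FFalse | FTrue => [::]
  | FEq t1 t2 => tfv t1 ++ tfv t2
  | FAtom _ ts => flatten (map tfv ts)
  | FNot f => ffv f
  | FAnd f g | FOr f g | FImp f g | FIff f g => ffv f ++ ffv g
  | FAll x f | FEx x f => filter (fun y => y != x) (ffv f)
  end.

Definition sentence (phi : formula) : bool := fwf phi && nilp (ffv phi).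

End Syntax.

Record structure (L : language) := Structure {
  dom : Type;
  dom_inh : dom;
  fint : forall f : Fn L, (farity f).-tuple dom -> dom;
  pint : forall p : Pr L, (parity p).-tuple dom -> Prop }.

Section Semantics.
Variables (L : language) (M : structure L).

Definition to_tuple (n : nat) (s : seq (dom M)) : n.-tuple (dom M) :=
  insubd (nseq_tuple n (dom_inh M)) s.

Fixpoint teval (rho : nat -> dom M) (t : term L) : dom M :=
  match t with
  | Var i => rho i
  | App f ts => @fint L M f (to_tuple _ (map (teval rho) ts))
  end.

Definition upd (rho : nat -> dom M) (x : nat) (d : dom M) : nat -> dom M :=
  fun y => if y == x then d else rho y.

Fixpoint sat (rho : nat -> dom M) (phi : formula L) : Prop :=
  match phi with
  | FFalse => False
  | FTrue => True
  | FEq t1 t2 => teval rho t1 = teval rho t2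
  | FAtom p ts => @pint L M p (to_tuple _ (map (teval rho) ts))
  | FNot f => ~ sat rho f
  | FAnd f g => sat rho f /\ sat rho g
  | FOr f g => sat rho f \/ sat rho g
  | FImp f g => sat rho f -> sat rho g
  | FIff f g => sat rho f <-> sat rho g
  | FAll x f => forall d, sat (upd rho x d) f
  | FEx x f => exists d, sat (upd rho x d) f
  end.

(* M satisfies phi (for sentences this does not depend on rho) *)
Definition satisfies (phi : formula L) : Prop := forall rho, sat rho phi.

End Semantics.

Definition cpair (a b : nat) : nat := ((a + b) * (a + b).+1) %/ 2 + b.

Definition seqcode (s : seq nat) : nat := foldr (fun a r => (cpair a r).+1) 0 s.

Section Coding.
Variable L : language.

Fixpoint tcode (t : term L) : nat :=
  match t with
  | Var i => cpair 0 i
  | App f ts => cpair 1 (cpair (pickle f) (seqcode (map tcode ts)))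
  end.

Fixpoint fcode (phi : formula L) : nat :=
  match phi with
  | FFalse => cpair 0 0
  | FTrue => cpair 1 0
  | FEq t1 t2 => cpair 2 (cpair (tcode t1) (tcode t2))
  | FAtom p ts => cpair 3 (cpair (pickle p) (seqcode (map tcode ts)))
  | FNot f => cpair 4 (fcode f)
  | FAnd f g => cpair 5 (cpair (fcode f) (fcode g))
  | FOr f g => cpair 6 (cpair (fcode f) (fcode g))
  | FImp f g => cpair 7 (cpair (fcode f) (fcode g))
  | FIff f g => cpair 8 (cpair (fcode f) (fcode g))
  | FAll x f => cpair 9 (cpair x (fcode f))
  | FEx x f => cpair 10 (cpair x (fcode f))
  end.

End Coding.

Inductive recf : nat -> Type :=
| r_zero : recf 0
| r_succ : recf 1
| r_proj (n : nat) (i : 'I_n) : recf n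
| r_comp (n m : nat) (g : recf m) (fs : recfs n m) : recf n
| r_prec (n : nat) (f : recf n) (g : recf n.+2) : recf n.+1
| r_mu (n : nat) (f : recf n.+1) : recf n
with recfs : nat -> nat -> Type :=
| rs_nil (n : nat) : recfs n 0
| rs_cons (n m : nat) (f : recf n) (fs : recfs n m) : recfs n m.+1.

(* reval f v y : the partial recursive function f on input v halts with
   output y.  In r_prec and r_mu the recursion variable is the first one. *)
Inductive reval : forall n, recf n -> seq nat -> nat -> Prop :=
| ev_zero : reval r_zero [::] 0
| ev_succ (x : nat) : reval r_succ [:: x] x.+1
| ev_proj (n : nat) (i : 'I_n) (v : seq nat) :
    size v = n -> reval (r_proj i) v (nth 0 v i)
| ev_comp (n m : nat) (g : recf m) (fs : recfs n m) (v w : seq nat) (y : nat) :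
    revals fs v w -> reval g w y -> reval (r_comp g fs) v y
| ev_prec0 (n : nat) (f : recf n) (g : recf n.+2) (v : seq nat) (y : nat) :
    reval f v y -> reval (r_prec f g) (0 :: v) y
| ev_precS (n : nat) (f : recf n) (g : recf n.+2) (v : seq nat) (x y z : nat) :
    reval (r_prec f g) (x :: v) y -> reval g (x :: y :: v) z ->
    reval (r_prec f g) (x.+1 :: v) z
| ev_mu (n : nat) (f : recf n.+1) (v : seq nat) (x : nat) :
    reval f (x :: v) 0 ->
    (forall y, y < x -> exists z, reval f (y :: v) z.+1) ->
    reval (r_mu f) v x
with revals : forall n m, recfs n m -> seq nat -> seq nat -> Prop :=
| evs_nil (n : nat) (v : seq nat) : size v = n -> revals (rs_nil n) v [::]
| evs_cons (n m : nat) (f : recf n) (fs : recfs n m) (v : seq nat) (y : nat)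
    (w : seq nat) :
    reval f v y -> revals fs v w -> revals (rs_cons f fs) v (y :: w).

Definition decidable_on (L : language) (G : formula L -> Prop)
  (Q : formula L -> Prop) : Prop :=
  exists f : recf 1, forall F, G F ->
    exists b : bool, reval f [:: fcode F] (nat_of_bool b) /\ (b <-> Q F).

Definition computable_on (L L' : language) (G : formula L -> Prop)
  (A : formula L -> formula L') : Prop :=
  exists f : recf 1, forall F, G F -> reval f [:: fcode F] (fcode (A F)).

Definition uniformly_encodable (L L' : language) (G : formula L -> Prop)
  (M : structure L) (G' : formula L' -> Prop) (U : structure L' -> Prop) : Prop :=
  exists A : formula L -> formula L',
    computable_on G A /\
    forall F, G F ->
      G' (A F) /\
      (satisfies M F <-> forall N, U N -> satisfies N (A F)) /\
      (satisfies M F <-> exists N, U N /\ satisfies N (A F)).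

From mathcomp Require Import all_boot.

(** A decision procedure for the class question, composed with the encoding
    algorithm, would decide truth in [M]: since every class in [C] is a
    non-empty subclass of [U], "all of [U] satisfy [A F]" implies "all of
    some [V] in [C] do", which implies "some structure of [U] does". *)

Lemma reval_comp1 (f g : recf 1) (x y z : nat) :
  reval f [:: x] y -> reval g [:: y] z ->
  reval (r_comp g (rs_cons f (rs_nil 1))) [:: x] z.
Proof.
move=> fxy gyz; apply: (ev_comp (w := [:: y])) gyz.
by apply: evs_cons => //; apply: evs_nil.
Qed.

Lemma decidable_on_reduction (L L' : language)
    (G : formula L -> Prop) (G' : formula L' -> Prop)
    (Q : formula L -> Prop) (Q' : formula L' -> Prop)
    (A : formula L -> formula L') :
  computable_on G A ->
  (forall F, G F -> G' (A F) /\ (Q F <-> Q' (A F))) ->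
  decidable_on G' Q' -> decidable_on G Q.
Proof.
move=> [f Hf] HA [d Hd]; exists (r_comp d (rs_cons f (rs_nil 1))) => F GF.
have [G'AF QQ'] := HA F GF.
have [b [db bQ']] := Hd _ G'AF.
exists b; split; first exact: reval_comp1 (Hf F GF) db.
exact: iff_trans bQ' (iff_sym QQ').
Qed.

Lemma some_subclass_satisfies_iff (L' : language)
    (U : structure L' -> Prop) (C : (structure L' -> Prop) -> Prop)
    (P : structure L' -> Prop) (Q : Prop) :
  (exists V, C V) ->
  (forall V, C V -> (exists N, V N) /\ (forall N, V N -> U N)) ->
  (Q <-> (forall N, U N -> P N)) ->
  (Q <-> (exists N, U N /\ P N)) ->
  (Q <-> (exists V, C V /\ forall N, V N -> P N)).
Proof.
move=> [V0 CV0] HC QallU QexU; split.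
  move=> /QallU allU; exists V0; split => // N V0N.
  exact/allU/((HC V0 CV0).2).
move=> [V [CV allV]]; apply/QexU.
have [[N VN] VU] := HC V CV.
by exists N; split; [exact: VU | exact: allV].
Qed.

Theorem theorem1p17 (L L' : language) (M : structure L)
  (U : structure L' -> Prop) (G : formula L -> Prop) (G' : formula L' -> Prop)
  (C : (structure L' -> Prop) -> Prop) :
  (exists N, U N) ->
  (forall F, G F -> sentence F) ->
  (forall F, G' F -> sentence F) ->
  uniformly_encodable G M G' U ->
  ~ decidable_on G (fun F => satisfies M F) ->
  (exists V, C V) ->
  (forall V, C V -> (exists N, V N) /\ (forall N, V N -> U N)) ->
  ~ decidable_on G' (fun F => exists V, C V /\ forall N, V N -> satisfies N F).
Proof.
move=> _ _ _ [A [compA HA]] undecM CV0 HC decC; apply: undecM.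
apply: decidable_on_reduction compA _ decC => F GF.
have [G'AF [allU exU]] := HA F GF.
by split=> //; exact: some_subclass_satisfies_iff CV0 HC allU exU.
Qed.
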